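(* Let $n\ge3$, $m\in\{2,3,\dots,n-1\}$ and $t\in(0,1]$. Then there exist a Hilbert space $\mathcal H$ and operators $T_1,\dots,T_n\in B(\mathcal H)$ with $\sum_{i=1}^nT_iT_i^*\le I$ and $\operatorname{rank}(I-\sum_iT_iT_i^* )<\infty$ such that, with $\varphi(X):=\sum_iT_iXT_i^*$ and $\varphi^*(X):=\sum_iT_i^*XT_i$, one has $\|\varphi^*(I)\|=m$ and $\operatorname{curv}_*(\varphi,I)=t$.
   Context: A tuple $T_1,\dots,T_n$ defines a Hilbert module over the free semigroup algebra; ''finite rank contractive'' means $\sum_iT_iT_i^*\le I$ and $\dim\overline{(I-\sum_iT_iT_i^* )\mathcal H}<\infty$. For positive $D$ with $\varphi(D)\le D$, $\operatorname{curv}_*(\varphi,D):=\lim_{k\to\infty}\frac{\operatorname{trace}[K_{\varphi,D}^*(P_{\le k}\otimes I)K_{\varphi,D}]}{1+\|\varphi^*(I)\|+\cdots+\|\varphi^*(I)\|^k}$, where $K_{\varphi,D}h:=\sum_{\alpha\in\mathbb F_n^+}e_\alpha\otimes(D-\varphi(D))^{1/2}T_\alpha^*h$ maps $\mathcal H$ into $F^2(H_n)\otimes\mathcal H$ ($F^2(H_n)$ the full Fock space with orthonormal basis $\{e_\alpha\}$ indexed by words in the free semigroup $\mathbb F_n^+$), and $P_{\le k}$ is the projection onto $\operatorname{span}\{e_\alpha:|\alpha|\le k\}$. *)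

From HB Require Import structures.
From mathcomp Require Import all_boot all_order all_algebra.
From mathcomp Require Import complex.
From mathcomp Require Import all_classical all_reals all_analysis.
Set Implicit Arguments. Unset Strict Implicit. Unset Printing Implicit Defensive.
Import Order.TTheory GRing.Theory Num.Theory.
Local Open Scope ring_scope.

Section HilbertDefs.
Variable R : realType.
Local Notation C := (complex R).
Variable H : lmodType C.
(* ip : inner product, linear in the first argument *)
Variable ip : H -> H -> C.

Definition cRe (z : C) : R := @complex.Re R z.
Definition cIm (z : C) : R := @complex.Im R z.
Definition cconj (z : C) : C := @complex.Complex R (cRe z) (- cIm z).

Definition is_inner_product : Prop :=
  [/\ forall (a : C) x y z, ip (a *: x + y) z = a * ip x z + ip y z,
      forall x y, ip y x = cconj (ip x y),
      forall x, cIm (ip x x) = 0 /\ 0 <= cRe (ip x x)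
    & forall x, ip x x = 0 -> x = 0].

Definition hnorm (x : H) : R := Num.sqrt (cRe (ip x x)).

Definition is_complete : Prop :=
  forall u : nat -> H,
    (forall e : R, 0 < e -> exists N, forall p q, (N <= p)%N -> (N <= q)%N ->
        hnorm (u p - u q) < e) ->
    exists l : H, forall e : R, 0 < e -> exists N, forall p, (N <= p)%N ->
        hnorm (u p - l) < e.

Definition is_hilbert : Prop := is_inner_product /\ is_complete.

Definition bounded_op (T : H -> H) : Prop :=
  (forall (a : C) x y, T (a *: x + y) = a *: T x + T y) /\
  exists c : R, forall x, hnorm (T x) <= c * hnorm x.

Definition is_adjoint (T S : H -> H) : Prop :=
  forall x y, ip (T x) y = ip x (S y).

Definition op_le (A B : H -> H) : Prop :=
  forall x, cIm (ip (A x) x) = cIm (ip (B x) x) /\ cRe (ip (A x) x) <= cRe (ip (B x) x).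

(* dim of the closure of the range of A is finite: the range lies in the span
   of finitely many vectors (a finite-dimensional subspace is closed) *)
Definition finite_rank (A : H -> H) : Prop :=
  exists s : seq H, forall x, exists c : nat -> C,
    A x = \sum_(i < size s) c i *: nth 0 s i.

Definition opnorm (A : H -> H) : R :=
  sup [set hnorm (A x) | x in [set x | hnorm x <= 1]].

Definition orthonormal (s : seq H) : Prop :=
  forall i j, (i < size s)%N -> (j < size s)%N ->
    ip (nth 0 s i) (nth 0 s j) = (if i == j then 1 else 0).

(* trace of a positive operator A: sup over finite orthonormal families of
   sum <A e, e>, i.e. the sum over an orthonormal basis *)
Definition ptrace (A : H -> H) : \bar R :=
  ereal_sup [set ((\sum_(e <- s) cRe (ip (A e) e))%:E)%E | s in orthonormal].

Variable n : nat.
Variable T Ts : 'I_n -> H -> H.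

Definition phi (X : H -> H) : H -> H := fun x => \sum_(i < n) T i (X (Ts i x)).
Definition phistar (X : H -> H) : H -> H := fun x => \sum_(i < n) Ts i (X (T i x)).

Definition Talpha (a : seq 'I_n) : H -> H := foldr (fun i f => T i \o f) id a.
Definition Tsalpha (a : seq 'I_n) : H -> H := foldr (fun i f => f \o Ts i) id a.

Definition defect (D : H -> H) : H -> H := fun x => D x - phi D x.

(* K^*_{phi,D} (P_{<=k} (x) I) K_{phi,D}
   = sum_{|alpha| <= k} T_alpha (D - phi(D))^{1/2} (D - phi(D))^{1/2} T_alpha^* *)
Definition KPK (D : H -> H) (k : nat) : H -> H := fun x =>
  \sum_(j < k.+1) \sum_(a : j.-tuple 'I_n) Talpha a (defect D (Tsalpha a x)).

Definition curv_seq (D : H -> H) (k : nat) : \bar R :=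
  (ptrace (KPK D k) *
   ((\sum_(j < k.+1) opnorm (phistar id) ^+ j)^-1)%:E)%E.

Definition curv_eq (D : H -> H) (c : R) : Prop :=
  (curv_seq D @ \oo --> (c%:E)%E)%classic.

End HilbertDefs.

From Pilot Require Import Defs.
From HB Require Import structures.
From mathcomp Require Import all_boot all_order all_algebra.
From mathcomp Require Import complex.
From mathcomp Require Import all_classical all_reals all_analysis.
From mathcomp Require Import ring lra zify.
Import Order.TTheory GRing.Theory Num.Theory.
Import numFieldTopology.Exports numFieldNormedType.Exports.
Local Open Scope ring_scope.
Local Open Scope classical_set_scope.
Local Open Scope complex_scope.
Set Implicit Arguments. Unset Strict Implicit. Unset Printing Implicit Defensive.

(* The Hilbert space is l^2 of a subtree V of the rooted m-ary tree, the
   vertex p of level k (p < m^k) having the children p*m + i, i < m.  For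
   i < m, T_i sends the basis vector of a vertex to that of its i-th child if
   this child lies in V (and to 0 otherwise), and T_i = 0 for i >= m.  Since
   every vertex of V has its parent in V, phi(I) = sum T_i T_i^* is the
   projection onto the levels >= 1, so I - phi(I) is the rank-one projection
   onto the root; phi^*(I) = sum T_i^* T_i multiplies each basis vector by the
   number of children of its vertex, hence has norm m once the root has all
   its m children; and K^*(P_{<=k} (x) I)K is the projection onto the levels
   <= k, whose trace counts the vertices of depth <= k.  Keeping the first
   ceil(t m^k) vertices of each level k >= 2 leaves between t m^k and
   t m^k + m vertices there, so this trace divided by 1 + m + ... + m^k tends
   to t. *)

Local Notation Re := complex.Re.
Local Notation Im := complex.Im.

Section ComplexModulus.
Variable R : rcfType.
Local Notation C := (complex R).

Definition cnorm2 (z : C) : R := Re z ^+ 2 + Im z ^+ 2.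

Lemma cnorm2_ge0 z : 0 <= cnorm2 z.
Proof. by rewrite addr_ge0 // sqr_ge0. Qed.

Lemma cnorm20 : cnorm2 0 = 0.
Proof. by rewrite /cnorm2 expr0n addr0. Qed.

Lemma cnorm2_eq0 z : cnorm2 z = 0 -> z = 0.
Proof.
case: z => a b; rewrite /cnorm2 /= => h.
have -> : a = 0 by nra.
by have -> : b = 0 by nra.
Qed.

Lemma sqr_Re_le z : Re z ^+ 2 <= cnorm2 z.
Proof. by rewrite lerDl sqr_ge0. Qed.

Lemma sqr_Im_le z : Im z ^+ 2 <= cnorm2 z.
Proof. by rewrite lerDr sqr_ge0. Qed.

Lemma cnorm2M a b : cnorm2 (a * b) = cnorm2 a * cnorm2 b.
Proof. by case: a => a1 a2; case: b => b1 b2; rewrite /cnorm2 /=; ring. Qed.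

Lemma cnorm2J z : cnorm2 z^* = cnorm2 z.
Proof. by case: z => a b; rewrite /cnorm2 /=; ring. Qed.

Lemma cnorm2_nat k : cnorm2 k%:R = k%:R ^+ 2.
Proof. by rewrite -(rmorph_nat (real_complex R)) /cnorm2 /= expr0n addr0. Qed.

Lemma cnorm2D_le a b : cnorm2 (a + b) <= 2 * cnorm2 a + 2 * cnorm2 b.
Proof.
case: a => a1 a2; case: b => b1 b2; rewrite /cnorm2 /=.
have := sqr_ge0 (a1 - b1); have := sqr_ge0 (a2 - b2); nra.
Qed.

Lemma mulcJ z : z * z^* = (cnorm2 z)%:C.
Proof.
by case: z => a b; apply/eqP; rewrite eq_complex /cnorm2 /=; apply/andP; split;
  apply/eqP; ring.
Qed.

Lemma Re_mulcJ_polar a b : Re (a * b^*) = (cnorm2 (a + b) - cnorm2 (a - b)) / 4%:R.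
Proof. by case: a => a1 a2; case: b => b1 b2; rewrite /cnorm2 /=; field. Qed.

Lemma Im_mulcJ_polar a b :
  Im (a * b^*) = (cnorm2 (a + 'i * b) - cnorm2 (a - 'i * b)) / 4%:R.
Proof. by case: a => a1 a2; case: b => b1 b2; rewrite /cnorm2 /=; field. Qed.

Lemma ReB (a b : C) : Re (a - b) = Re a - Re b.
Proof. by case: a b => [? ?] [? ?]. Qed.

Lemma ImB (a b : C) : Im (a - b) = Im a - Im b.
Proof. by case: a b => [? ?] [? ?]. Qed.

End ComplexModulus.

Section ComplexLimits.
Variable R : realType.
Local Notation C := (complex R).

Definition cvgC (u : nat -> C) (l : C) : Prop :=
  (fun K => Re (u K)) @ \oo --> Re l /\ (fun K => Im (u K)) @ \oo --> Im l.

Definition limC (u : nat -> C) : C :=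
  Complex (limn (fun K => Re (u K))) (limn (fun K => Im (u K))).

Lemma cvgC_lim u l : cvgC u l -> limC u = l.
Proof. by case: l => a b [/cvg_lim ha /cvg_lim hb]; rewrite /limC ha ?hb. Qed.

Lemma cvgC_limC u :
  cvgn (fun K => Re (u K)) -> cvgn (fun K => Im (u K)) -> cvgC u (limC u).
Proof. by []. Qed.

Lemma cvgC_cst c : cvgC (fun=> c) c.
Proof. by split; apply: cvg_cst. Qed.

Lemma cvgC_near_cst u l : (\forall K \near \oo, u K = l) -> cvgC u l.
Proof. by move=> ul; split; apply: cvg_near_cst; apply: filterS ul => K ->. Qed.

Lemma cvgC_shiftS u l : cvgC u l -> cvgC (fun K => u K.+1) l.
Proof.
case=> uRe uIm; split.
- by rewrite (cvg_shiftS (fun K => Re (u K))).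
- by rewrite (cvg_shiftS (fun K => Im (u K))).
Qed.

Lemma cvgC_real (u : nat -> R) (l : R) : u @ \oo --> l -> cvgC (fun K => (u K)%:C) l%:C.
Proof. by move=> ul; split => //=; exact: cvg_cst. Qed.

Lemma cvgC_conj u l : cvgC u l -> cvgC (fun K => (u K)^*) l^*.
Proof.
have ReJ (z : C) : Re z^* = Re z by case: z.
have ImJ (z : C) : Im z^* = - Im z by case: z.
case=> uRe uIm; split; under eq_cvg do rewrite ?ReJ ?ImJ; rewrite ?ReJ ?ImJ //.
exact: cvgN.
Qed.

Lemma cvgC_scaleD (a : C) u v lu lv : cvgC u lu -> cvgC v lv ->
  cvgC (fun K => a * u K + v K) (a * lu + lv).
Proof.
have ReMD (z y : C) : Re (a * z + y) = Re a * Re z - Im a * Im z + Re y.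
  by case: (a) z y => [? ?] [? ?] [? ?] /=; ring.
have ImMD (z y : C) : Im (a * z + y) = Re a * Im z + Im a * Re z + Im y.
  by case: (a) z y => [? ?] [? ?] [? ?] /=; ring.
move=> [uRe uIm] [vRe vIm]; split; under eq_cvg do rewrite ?ReMD ?ImMD;
  rewrite ?ReMD ?ImMD; apply: cvgD => //; [apply: cvgB | apply: cvgD];
  exact: cvgMl_tmp.
Qed.

Lemma cvgC_B u v lu lv : cvgC u lu -> cvgC v lv ->
  cvgC (fun K => u K - v K) (lu - lv).
Proof.
move=> [uRe uIm] [vRe vIm]; split; under eq_cvg do rewrite ?ReB ?ImB;
  rewrite ?ReB ?ImB; exact: cvgB.
Qed.

Lemma cvgC_cnorm2 u l : cvgC u l -> (fun K => cnorm2 (u K)) @ \oo --> cnorm2 l.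
Proof.
move=> [uRe uIm]; under eq_cvg do rewrite /cnorm2 !expr2.
by rewrite /cnorm2 !expr2; apply: cvgD; apply: cvgM.
Qed.

Lemma cvgn_sqr_cauchy (a : nat -> R) :
  (forall e, 0 < e -> exists N, forall p q, (N <= p)%N -> (N <= q)%N ->
     (a p - a q) ^+ 2 < e) ->
  cvgn a.
Proof.
move=> a_cauchy; apply/cauchy_cvgP; apply: cauchy_exP => e e0.
have [N aN] := a_cauchy _ (exprn_gt0 2 e0).
exists (a N), N => // p Np /=; rewrite -ball_normE /=.
have := aN N p (leqnn N) Np; case: (ler0P (a N - a p)) => _; nra.
Qed.

End ComplexLimits.

Section InnerProduct.
Variables (R : realType) (H : lmodType (complex R)) (ip : H -> H -> complex R).
Hypothesis ipP : is_inner_product ip.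

Lemma ipC x y : ip y x = (ip x y)^*.
Proof. by case: ipP => _ ipJ _ _; rewrite ipJ /cconj /cRe /cIm; case: (ip x y). Qed.

Lemma ipDl x y z : ip (x + y) z = ip x z + ip y z.
Proof. by case: ipP => lin _ _ _; rewrite -[x]scale1r lin mul1r scale1r. Qed.

Lemma ip0l z : ip 0 z = 0.
Proof.
by apply: (addrI (ip 0 z)); rewrite -ipDl !addr0.
Qed.

Lemma ipZl a x z : ip (a *: x) z = a * ip x z.
Proof. by case: ipP => lin _ _ _; rewrite -[a *: x]addr0 lin ip0l addr0. Qed.

Lemma ipBl x y z : ip (x - y) z = ip x z - ip y z.
Proof. by rewrite ipDl -scaleN1r ipZl mulN1r. Qed.

Lemma ipBr z x y : ip z (x - y) = ip z x - ip z y.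
Proof. by rewrite ipC ipBl rmorphB /= -!ipC. Qed.

Lemma ip_suml I (r : seq I) (F : I -> H) z :
  ip (\sum_(i <- r) F i) z = \sum_(i <- r) ip (F i) z.
Proof. by apply: (big_morph (ip^~ z)) => [x y|]; rewrite ?ipDl ?ip0l. Qed.

Lemma Re_ip_ge0 x : 0 <= Re (ip x x).
Proof. by case: ipP => _ _ /(_ x) []. Qed.

Lemma bessel (s : seq H) x :
  Defs.orthonormal ip s -> \sum_(e <- s) cnorm2 (ip x e) <= Re (ip x x).
Proof.
move=> ons; rewrite (big_nth 0) big_mkord.
pose e (i : 'I_(size s)) := nth 0 s i.
pose c i := ip x (e i).
pose S := \sum_i c i *: e i.
have ipSe i : ip S (e i) = c i.
  rewrite ip_suml (bigD1 i) //= big1 => [|j ji]; rewrite ipZl ons //.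
    by rewrite eqxx mulr1 addr0.
  by rewrite ifN ?mulr0.
have sum_c : \sum_i c i * (c i)^* = (\sum_i cnorm2 (c i))%:C.
  by rewrite rmorph_sum; apply: eq_bigr => i _; rewrite mulcJ.
have ipSx : ip S x = (\sum_i cnorm2 (c i))%:C.
  by rewrite -sum_c ip_suml; apply: eq_bigr => i _; rewrite ipZl (ipC x).
have ipSS : ip S S = ip S x.
  by rewrite ipSx -sum_c ip_suml; apply: eq_bigr => i _; rewrite ipZl (ipC S) ipSe.
have := Re_ip_ge0 (x - S).
rewrite ipBl !ipBr ipSS (ipC S x) ipSx conjc_real subrr subr0.
by case: (ip x x) => a b; rewrite /= subr_ge0.
Qed.

End InnerProduct.

Section GradedL2.
Variable R : realType.
Local Notation C := (complex R).
Variables (w : nat -> nat) (V : nat -> nat -> bool).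

(* A vector is a family [x k p] indexed by a level [k] and a position
   [p < w k] in that level; [psum f K] sums [f] over the first [K] levels. *)
Definition psum (U : zmodType) (f : nat -> nat -> U) (K : nat) : U :=
  \sum_(k < K) \sum_(p < w k) f k p.
Arguments psum {U}.

Lemma eq_psum (U : zmodType) (f g : nat -> nat -> U) K :
  (forall k p, f k p = g k p) -> psum f K = psum g K.
Proof. by move=> fg; apply: eq_bigr => k _; apply: eq_bigr => p _. Qed.

Lemma psum_morph (U U' : zmodType) (h : U -> U') f K :
  {morph h : a b / a + b} -> h 0 = 0 -> h (psum f K) = psum (fun k p => h (f k p)) K.
Proof.
move=> hD h0; rewrite /psum (big_morph h hD h0).
by apply: eq_bigr => k _; apply: big_morph.
Qed.

Lemma psumD (U : zmodType) (f g : nat -> nat -> U) K :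
  psum (fun k p => f k p + g k p) K = psum f K + psum g K.
Proof. by rewrite /psum -big_split; apply: eq_bigr => k _; rewrite big_split. Qed.

Lemma psumB (U : zmodType) (f g : nat -> nat -> U) K :
  psum (fun k p => f k p - g k p) K = psum f K - psum g K.
Proof. by rewrite /psum -sumrB; apply: eq_bigr => k _; rewrite sumrB. Qed.

Lemma psumZ (U : pzRingType) (c : U) f K :
  psum (fun k p => c * f k p) K = c * psum f K.
Proof. by rewrite /psum mulr_sumr; apply: eq_bigr => k _; rewrite mulr_sumr. Qed.

Lemma psum_delta (U : zmodType) j q (c : U) K :
  psum (fun k p => if (k == j) && (p == q) then c else 0) K =
  if (j < K)%N && (q < w j)%N then c else 0.
Proof.
rewrite /psum (eq_bigr (fun k : 'I_K =>
    if k == j :> nat then (if (q < w j)%N then c else 0) else 0)) => [|k _].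
  rewrite -big_mkcond (big_ord1_eq _ (fun=> if (q < w j)%N then c else 0)).
  by case: (j < K)%N.
case: (nat_of_ord k =P j) => [->|_]; last by rewrite big1.
by rewrite -big_mkcond (big_ord1_eq _ (fun=> c)).
Qed.

Lemma psum_trunc (U : zmodType) (f : nat -> nat -> U) k K : (k <= K)%N ->
  psum (fun j p => if (j < k)%N then f j p else 0) K = psum f k.
Proof.
move=> kK; rewrite [RHS]/psum (big_ord_widen K (fun j => \sum_(p < w j) f j p)) //.
by rewrite big_mkcond; apply: eq_bigr => j _; case: ifP => _ //; rewrite big1.
Qed.

Lemma psum_big (U : zmodType) I (r : seq I) (f : I -> nat -> nat -> U) K :
  psum (fun k p => \sum_(i <- r) f i k p) K = \sum_(i <- r) psum (f i) K.
Proof.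
rewrite /psum exchange_big; apply: eq_bigr => k _.
by rewrite exchange_big.
Qed.

Lemma ler_psum (f g : nat -> nat -> R) K :
  (forall k p, f k p <= g k p) -> psum f K <= psum g K.
Proof. by move=> fg; apply: ler_sum => k _; apply: ler_sum => p _. Qed.

Section NonnegativeSums.
Variable f : nat -> nat -> R.
Hypothesis f_ge0 : forall k p, 0 <= f k p.

Lemma psum_nondecreasing : nondecreasing_seq (psum f).
Proof.
move=> K K' KK'; rewrite /psum -(subnKC KK') big_split_ord /= lerDl.
by apply: sumr_ge0 => k _; apply: sumr_ge0.
Qed.

Lemma psum_term_le k p K : (k < K)%N -> (p < w k)%N -> f k p <= psum f K.
Proof.
move=> kK pk; apply: le_trans (psum_nondecreasing kK).
rewrite /psum big_ord_recr /= -[f k p]add0r lerD ?sumr_ge0 // => [i _|].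
  by apply: sumr_ge0.
by rewrite (bigD1 (Ordinal pk)) //= lerDl sumr_ge0.
Qed.

End NonnegativeSums.

Definition is_l2 (x : nat -> nat -> C) : Prop :=
  (forall k p, ~~ V k p -> x k p = 0) /\
  exists M, forall K, psum (fun k p => cnorm2 (x k p)) K <= M.

Lemma is_l20 : is_l2 (fun _ _ => 0).
Proof.
split=> //; exists 0 => K.
by rewrite /psum big1 // => k _; rewrite big1 // => p _; rewrite cnorm20.
Qed.

Lemma is_l2D x y : is_l2 x -> is_l2 y -> is_l2 (fun k p => x k p + y k p).
Proof.
move=> [x_out [Mx xM]] [y_out [My yM]]; split=> [k p kp|].
  by rewrite x_out // y_out // addr0.
exists (2 * Mx + 2 * My) => K.
apply: le_trans (ler_psum K (fun k p => cnorm2D_le (x k p) (y k p))) _.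
by rewrite psumD !psumZ lerD // ler_pM2l.
Qed.

Lemma is_l2Z c x : is_l2 x -> is_l2 (fun k p => c * x k p).
Proof.
move=> [x_out [M xM]]; split=> [k p kp|]; first by rewrite x_out // mulr0.
exists (cnorm2 c * M) => K.
rewrite (eq_psum (g := fun k p => cnorm2 c * cnorm2 (x k p))) => [|k p].
  by rewrite psumZ ler_wpM2l // cnorm2_ge0.
exact: cnorm2M.
Qed.

Lemma is_l2N x : is_l2 x -> is_l2 (fun k p => - x k p).
Proof.
move=> /(is_l2Z (-1)); congr is_l2.
by apply/funext => k; apply/funext => p; rewrite mulN1r.
Qed.

Record l2 := L2 { coef : nat -> nat -> C; coefP : `[< is_l2 coef >] }.

Lemma is_l2_coef x : is_l2 (coef x).
Proof. exact/asboolP/(coefP x). Qed.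

Lemma coef_out x k p : ~~ V k p -> coef x k p = 0.
Proof. by case: (is_l2_coef x) => x_out _; apply: x_out. Qed.

Lemma eq_l2 x y : (forall k p, coef x k p = coef y k p) -> x = y.
Proof.
case: x y => [x xP] [y yP] /= xy.
have exy : x = y by apply/funext => k; apply/funext => p.
by subst y; congr L2; apply: bool_irrelevance.
Qed.

Definition l2_zero := L2 (asboolT is_l20).
Definition l2_add x y := L2 (asboolT (is_l2D (is_l2_coef x) (is_l2_coef y))).
Definition l2_opp x := L2 (asboolT (is_l2N (is_l2_coef x))).
Definition l2_scale c x := L2 (asboolT (is_l2Z c (is_l2_coef x))).

Lemma l2_addA : associative l2_add.
Proof. by move=> x y z; apply: eq_l2 => k p /=; rewrite addrA. Qed.

Lemma l2_addC : commutative l2_add.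
Proof. by move=> x y; apply: eq_l2 => k p /=; rewrite addrC. Qed.

Lemma l2_add0 : left_id l2_zero l2_add.
Proof. by move=> x; apply: eq_l2 => k p /=; rewrite add0r. Qed.

Lemma l2_addN : left_inverse l2_zero l2_opp l2_add.
Proof. by move=> x; apply: eq_l2 => k p /=; rewrite addNr. Qed.

HB.instance Definition _ := gen_eqMixin l2.
HB.instance Definition _ := gen_choiceMixin l2.
HB.instance Definition _ := GRing.isZmodule.Build l2 l2_addA l2_addC l2_add0 l2_addN.

Lemma l2_scaleA a b x : l2_scale a (l2_scale b x) = l2_scale (a * b) x.
Proof. by apply: eq_l2 => k p /=; rewrite mulrA. Qed.

Lemma l2_scale1 : left_id 1 l2_scale.
Proof. by move=> x; apply: eq_l2 => k p /=; rewrite mul1r. Qed.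

Lemma l2_scaleDr : right_distributive l2_scale +%R.
Proof. by move=> a x y; apply: eq_l2 => k p /=; rewrite mulrDr. Qed.

Lemma l2_scaleDl x : {morph l2_scale^~ x : a b / a + b}.
Proof. by move=> a b; apply: eq_l2 => k p /=; rewrite mulrDl. Qed.

HB.instance Definition _ :=
  GRing.Zmodule_isLmodule.Build C l2 l2_scaleA l2_scale1 l2_scaleDr l2_scaleDl.

Lemma coefD x y k p : coef (x + y) k p = coef x k p + coef y k p. Proof. by []. Qed.
Lemma coefB x y k p : coef (x - y) k p = coef x k p - coef y k p. Proof. by []. Qed.
Lemma coefZ c x k p : coef (c *: x) k p = c * coef x k p. Proof. by []. Qed.

Lemma coef_sum I (r : seq I) (P : pred I) (F : I -> l2) k p :
  coef (\sum_(i <- r | P i) F i) k p = \sum_(i <- r | P i) coef (F i) k p.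
Proof. by apply: (big_morph (coef^~ k ^~ p)). Qed.

Definition pnorm2 (x : l2) : nat -> R := psum (fun k p => cnorm2 (coef x k p)).

Definition l2norm2 (x : l2) : R := limn (pnorm2 x).

Lemma pnorm2_nondecreasing x : nondecreasing_seq (pnorm2 x).
Proof. by apply: psum_nondecreasing => k p; apply: cnorm2_ge0. Qed.

Lemma cvg_pnorm2 x : pnorm2 x @ \oo --> l2norm2 x.
Proof.
apply: nondecreasing_is_cvgn; first exact: pnorm2_nondecreasing.
by have [_ [M xM]] := is_l2_coef x; exists M => _ [K _ <-]; apply: xM.
Qed.

Lemma pnorm2_le x K : pnorm2 x K <= l2norm2 x.
Proof.
by apply: nondecreasing_cvgn_le; [exact: pnorm2_nondecreasing | exact: cvg_pnorm2].
Qed.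

Lemma l2norm2_le x M : (forall K, pnorm2 x K <= M) -> l2norm2 x <= M.
Proof. by move=> xM; apply: limr_le; [exact: cvg_pnorm2 | apply: nearW]. Qed.

Lemma l2norm2_ge0 x : 0 <= l2norm2 x.
Proof. by apply: le_trans (pnorm2_le x 0); rewrite /pnorm2 /psum big_ord0. Qed.

Lemma l2norm2Z c x : l2norm2 (c *: x) = cnorm2 c * l2norm2 x.
Proof.
rewrite /l2norm2 (_ : pnorm2 (c *: x) = fun K => cnorm2 c * pnorm2 x K).
  by apply: cvg_lim => //; apply: cvgMl_tmp; apply: cvg_pnorm2.
apply/funext => K; rewrite -psumZ; apply: eq_psum => k p.
by rewrite coefZ cnorm2M.
Qed.

Definition pdot (x y : l2) : nat -> C := psum (fun k p => coef x k p * (coef y k p)^*).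

Definition l2dot (x y : l2) : C := limC (pdot x y).

Lemma Re_pdot x y K : Re (pdot x y K) = (pnorm2 (x + y) K - pnorm2 (x - y) K) / 4%:R.
Proof.
rewrite /pnorm2 -psumB mulrC -psumZ psum_morph; last 2 first.
- by move=> [? ?] [? ?].
- by [].
by apply: eq_psum => k p; rewrite Re_mulcJ_polar mulrC.
Qed.

Lemma Im_pdot x y K :
  Im (pdot x y K) = (pnorm2 (x + 'i *: y) K - pnorm2 (x - 'i *: y) K) / 4%:R.
Proof.
rewrite /pnorm2 -psumB mulrC -psumZ psum_morph; last 2 first.
- by move=> [? ?] [? ?].
- by [].
by apply: eq_psum => k p; rewrite Im_mulcJ_polar mulrC.
Qed.

Lemma cvgC_pdot x y : cvgC (pdot x y) (l2dot x y).
Proof.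
(* by polarization, from the convergence of the partial sums of squares *)
apply: cvgC_limC; apply/cvg_ex.
- exists ((l2norm2 (x + y) - l2norm2 (x - y)) / 4%:R).
  under eq_cvg do rewrite Re_pdot.
  by apply: cvgMr_tmp; apply: cvgB; apply: cvg_pnorm2.
- exists ((l2norm2 (x + 'i *: y) - l2norm2 (x - 'i *: y)) / 4%:R).
  under eq_cvg do rewrite Im_pdot.
  by apply: cvgMr_tmp; apply: cvgB; apply: cvg_pnorm2.
Qed.

Lemma l2dot_linl a x y z : l2dot (a *: x + y) z = a * l2dot x z + l2dot y z.
Proof.
apply: cvgC_lim; rewrite (_ : pdot _ z = fun K => a * pdot x z K + pdot y z K).
  by apply: cvgC_scaleD; apply: cvgC_pdot.
apply/funext => K; rewrite /pdot -psumZ -psumD; apply: eq_psum => k p.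
by rewrite coefD coefZ mulrDl mulrA.
Qed.

Lemma l2dotC x y : l2dot y x = (l2dot x y)^*.
Proof.
apply: cvgC_lim; rewrite (_ : pdot y x = fun K => (pdot x y K)^*).
  by apply: cvgC_conj; apply: cvgC_pdot.
apply/funext => K; rewrite /pdot psum_morph ?rmorph0 //; last exact: rmorphD.
by apply: eq_psum => k p; rewrite rmorphM /= conjcK mulrC.
Qed.

Lemma l2dot_self x : l2dot x x = (l2norm2 x)%:C.
Proof.
apply: cvgC_lim; rewrite (_ : pdot x x = fun K => (pnorm2 x K)%:C).
  by apply: cvgC_real; apply: cvg_pnorm2.
apply/funext => K; rewrite /pnorm2 psum_morph ?rmorph0 //; last exact: rmorphD.
by apply: eq_psum => k p; apply: mulcJ.
Qed.

Lemma hnorm_l2 x : hnorm l2dot x = Num.sqrt (l2norm2 x).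
Proof. by rewrite /hnorm l2dot_self. Qed.

Definition delta_coef j q k p : C := if [&& k == j, p == q & V j q] then 1 else 0.

Lemma cnorm2_delta_coef j q k p :
  cnorm2 (delta_coef j q k p) = if (k == j) && (p == q) then (V j q)%:R else 0.
Proof.
rewrite /delta_coef; case: (k == j); case: (p == q); case: (V j q);
  by rewrite /= ?cnorm20 // /cnorm2 /= expr1n expr0n addr0.
Qed.

Lemma is_l2_delta j q : is_l2 (delta_coef j q).
Proof.
split=> [k p|].
  by rewrite /delta_coef; case: (k =P j) => [->|]; case: (p =P q) => [->|] //= /negPf->.
exists 1 => K; rewrite (eq_psum _ (cnorm2_delta_coef j q)) psum_delta.
by case: ifP; case: (V j q); rewrite ?ler01 ?lexx.
Qed.

Definition delta j q : l2 := L2 (asboolT (is_l2_delta j q)).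

Lemma coef_delta j q k p : coef (delta j q) k p = delta_coef j q k p.
Proof. by []. Qed.

Hypothesis V_lt : forall k p, V k p -> (p < w k)%N.

Lemma cnorm2_coef_le x k p : cnorm2 (coef x k p) <= l2norm2 x.
Proof.
have [/V_lt pk|/(coef_out x)->] := boolP (V k p); last first.
  by rewrite cnorm20 l2norm2_ge0.
apply: le_trans (pnorm2_le x k.+1).
by apply: psum_term_le => // *; apply: cnorm2_ge0.
Qed.

Lemma l2norm2_eq0 x : l2norm2 x = 0 -> x = 0.
Proof.
move=> x0; apply: eq_l2 => k p; apply: cnorm2_eq0.
by apply/le_anti; rewrite cnorm2_ge0 andbT -x0 cnorm2_coef_le.
Qed.

Lemma l2dot_inner : is_inner_product l2dot.
Proof.
split.
- exact: l2dot_linl.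
- by move=> x y; rewrite l2dotC /cconj /cRe /cIm; case: (l2dot x y).
- by move=> x; rewrite l2dot_self /cIm /cRe /= l2norm2_ge0.
- by move=> x; rewrite l2dot_self => -[/l2norm2_eq0].
Qed.

Lemma l2dot_delta x j q : V j q -> l2dot x (delta j q) = coef x j q.
Proof.
move=> Vjq; apply: cvgC_lim; apply: cvgC_near_cst; near=> K.
rewrite /pdot (eq_psum (g := fun k p => if (k == j) && (p == q) then coef x j q else 0)).
  rewrite psum_delta (V_lt Vjq) andbT ifT //.
  by near: K; apply: nbhs_infty_gt.
move=> k p; rewrite coef_delta /delta_coef Vjq andbT.
by case: (k =P j) => [->|_]; case: (p =P q) => [->|_] /=;
  rewrite ?rmorph1 ?rmorph0 ?mulr1 ?mulr0.
Unshelve. all: end_near.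
Qed.

Lemma l2norm2_delta j q : V j q -> l2norm2 (delta j q) = 1.
Proof.
move=> Vjq; have := l2dot_delta (delta j q) Vjq.
by rewrite l2dot_self coef_delta /delta_coef !eqxx Vjq => -[].
Qed.

Lemma psum_cnorm2_le_lim (v : nat -> nat -> nat -> C) l M K :
  (forall k p, cvgC (fun q => v q k p) (l k p)) ->
  (\forall q \near \oo, psum (fun k p => cnorm2 (v q k p)) K <= M) ->
  psum (fun k p => cnorm2 (l k p)) K <= M.
Proof.
move=> vl vM; apply: (ler_cvg_to _ (cvg_cst M) vM).
apply: cvg_big => //; first exact: add_continuous.
move=> k _; apply: cvg_big => //; first exact: add_continuous.
by move=> p _; apply: cvgC_cnorm2.
Qed.

Section Completeness.
Variable u : nat -> l2.
Hypothesis u_cauchy : forall e, 0 < e ->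
  exists N, forall a b, (N <= a)%N -> (N <= b)%N -> l2norm2 (u a - u b) < e.

Definition coef_lim k p : C := limC (fun n => coef (u n) k p).

Lemma cvgC_coef_lim k p : cvgC (fun n => coef (u n) k p) (coef_lim k p).
Proof.
apply: cvgC_limC; apply: cvgn_sqr_cauchy => e /u_cauchy [N uN];
  exists N => a b Na Nb; apply: le_lt_trans (uN a b Na Nb);
  apply: le_trans (cnorm2_coef_le _ k p);
  rewrite coefB -?ReB -?ImB; [exact: sqr_Re_le | exact: sqr_Im_le].
Qed.

Lemma coef_lim_out k p : ~~ V k p -> coef_lim k p = 0.
Proof.
move=> kp; apply: cvgC_lim; apply: cvgC_near_cst; apply: nearW => n.
exact: coef_out.
Qed.

Lemma psum_coef_lim_le e : 0 < e -> exists N, forall a K, (N <= a)%N ->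
  psum (fun k p => cnorm2 (coef (u a) k p - coef_lim k p)) K <= e.
Proof.
move=> /u_cauchy [N uN]; exists N => a K Na.
apply: (@psum_cnorm2_le_lim (fun q k p => coef (u a) k p - coef (u q) k p)).
  by move=> k p; apply: cvgC_B; [apply: cvgC_cst | apply: cvgC_coef_lim].
near=> q; apply/ltW/(le_lt_trans (pnorm2_le (u a - u q) K))/uN => //.
by near: q; apply: nbhs_infty_ge.
Unshelve. all: end_near.
Qed.

Lemma is_l2_coef_lim : is_l2 coef_lim.
Proof.
have [N uN] := psum_coef_lim_le ltr01.
have d_l2 : is_l2 (fun k p => coef (u N) k p - coef_lim k p).
  split=> [k p kp|]; last by exists 1 => K; apply: uN.
  by rewrite coef_out // coef_lim_out // subr0.
have := is_l2D (is_l2_coef (u N)) (is_l2N d_l2).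
by congr is_l2; apply/funext => k; apply/funext => p; rewrite opprB addrC subrK.
Qed.

End Completeness.

Lemma l2dot_complete : is_complete l2dot.
Proof.
move=> u u_cauchy.
have cauchy2 e : 0 < e -> exists N, forall a b, (N <= a)%N -> (N <= b)%N ->
    l2norm2 (u a - u b) < e.
  move=> e0; have /u_cauchy [N uN] : 0 < Num.sqrt e by rewrite sqrtr_gt0.
  by exists N => a b Na Nb; move: (uN a b Na Nb); rewrite hnorm_l2 ltr_sqrt.
exists (L2 (asboolT (is_l2_coef_lim cauchy2))) => e e0.
have e2 : 0 < e / 2 by rewrite divr_gt0.
have [N uN] := psum_coef_lim_le cauchy2 (exprn_gt0 2 e2).
exists N => a Na; rewrite hnorm_l2.
apply: (@le_lt_trans _ _ (e / 2)); last by rewrite ltr_pdivrMr // ltr_pMr // ltr1n.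
rewrite -(ger0_norm (ltW e2)) -sqrtr_sqr ler_sqrt ?exprn_ge0 ?(ltW e2) //.
by apply: l2norm2_le => K; apply: uN.
Qed.

End GradedL2.

Arguments l2dot {R w V}.
Arguments delta {R w V} j%_N q%_N.
Arguments l2dot_inner {R w V}.
Arguments l2dot_delta {R w V}.
Arguments l2norm2_delta {R w V}.

Lemma sum1_ord M : (\sum_(p < M) 1)%N = M.
Proof. by rewrite -[RHS]card_ord -sum1_card. Qed.

Lemma big_tuple_cons (U : zmodType) (I : finType) j (F : seq I -> U) :
  \sum_(a : j.+1.-tuple I) F a = \sum_(i : I) \sum_(a : j.-tuple I) F (i :: a).
Proof.
rewrite (partition_big (fun a : j.+1.-tuple I => thead a) xpredT) //=.
apply: eq_bigr => i _.
rewrite (reindex_onto (fun a : j.-tuple I => [tuple of i :: a])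
                      (fun a => behead_tuple a)) /=.
  by apply: eq_bigl => a; rewrite theadE eqxx /=; apply/eqP/val_inj.
by move=> a /eqP <-; apply: val_inj; rewrite /= [in RHS](tuple_eta a).
Qed.

Section TreeShifts.
Variable R : realType.
Local Notation C := (complex R).
Variables (m : nat) (V : nat -> nat -> bool).
Hypothesis m_gt0 : (0 < m)%N.
Hypothesis V_lt : forall k p, V k p -> (p < m ^ k)%N.
Hypothesis V_parent : forall k q, V k.+1 q -> V k (q %/ m)%N.

Local Notation H := (l2 R (expn m) V).
Local Notation ip := (@l2dot R (expn m) V).

Lemma divn_child p i : (i < m)%N -> ((p * m + i) %/ m = p)%N.
Proof.
by move=> im; rewrite (divnMDl _ _ (leq_ltn_trans (leq0n i) im)) divn_small ?addn0.
Qed.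

Lemma modn_child p i : (i < m)%N -> ((p * m + i) %% m = i)%N.
Proof. by move=> im; rewrite modnMDl modn_small. Qed.

Lemma sum_modn_eq (U : zmodType) (G : nat -> U) i M : (i < m)%N ->
  \sum_(q < M * m) (if (q %% m == i)%N then G q else 0) = \sum_(p < M) G (p * m + i)%N.
Proof.
move=> im.
rewrite -(big_mkord xpredT (fun q => if (q %% m == i)%N then G q else 0)).
rewrite big_nat_mul big_mkord.
apply: eq_bigr => p _; rewrite -{1}[(p * m)%N]add0n big_addn mulSn addnK.
transitivity (\sum_(r < m) if r == i :> nat then G (p * m + i)%N else 0).
  rewrite -(big_mkord xpredT (fun r => if (r == i)%N then G (p * m + i)%N else 0)).
  apply: eq_big_nat => r /= rm.
  by rewrite addnC modnMDl modn_small //; case: eqP => [->|].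
by rewrite -big_mkcond (big_ord1_eq _ (fun=> G (p * m + i)%N)) im.
Qed.

Definition shift_coef (i : nat) (x : nat -> nat -> C) k q : C :=
  if k is k'.+1 then
    if [&& V k q, q %% m == i & i < m]%N then x k' (q %/ m)%N else 0
  else 0.

Definition unshift_coef (i : nat) (x : nat -> nat -> C) k p : C :=
  if [&& V k p, V k.+1 (p * m + i) & (i < m)%N] then x k.+1 (p * m + i)%N else 0.

Lemma level_shift_le i x k :
  \sum_(q < m ^ k.+1) cnorm2 (shift_coef i x k.+1 q) <= \sum_(p < m ^ k) cnorm2 (x k p).
Proof.
have [im|mi] := ltnP i m; last first.
  rewrite big1 ?sumr_ge0 // => [p _|q _]; first exact: cnorm2_ge0.
  by rewrite /= ltnNge mi !andbF cnorm20.
apply: le_trans (_ : _ <= \sum_(q < m ^ k * m)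
    (if (q %% m == i)%N then cnorm2 (x k (q %/ m)%N) else 0)) _.
  rewrite expnSr; apply: ler_sum => q _ /=.
  rewrite im andbT; case: (q %% m == i)%N; rewrite ?andbF ?andbT ?cnorm20 //.
  by case: (V _ _); rewrite ?cnorm20 ?cnorm2_ge0.
rewrite (sum_modn_eq (fun q => cnorm2 (x k (q %/ m)%N))) //.
by rewrite (eq_bigr (fun p : 'I__ => cnorm2 (x k p))) // => p _; rewrite divn_child.
Qed.

Lemma level_unshift_le i x k :
  \sum_(p < m ^ k) cnorm2 (unshift_coef i x k p) <= \sum_(q < m ^ k.+1) cnorm2 (x k.+1 q).
Proof.
have [im|mi] := ltnP i m; last first.
  rewrite big1 ?sumr_ge0 // => [q _|p _]; first exact: cnorm2_ge0.
  by rewrite /unshift_coef ltnNge mi !andbF cnorm20.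
apply: le_trans (_ : _ <= \sum_(p < m ^ k) cnorm2 (x k.+1 (p * m + i)%N)) _.
  apply: ler_sum => p _; rewrite /unshift_coef.
  by case: ifP; rewrite ?cnorm20 ?cnorm2_ge0.
rewrite expnSr -(sum_modn_eq (fun q => cnorm2 (x k.+1 q))) //; apply: ler_sum => q _.
by case: ifP => _ //; apply: cnorm2_ge0.
Qed.

Lemma psum_shift_le i x K :
  psum (expn m) (fun k q => cnorm2 (shift_coef i x k q)) K <=
  psum (expn m) (fun k p => cnorm2 (x k p)) K.
Proof.
case: K => [|K]; first by rewrite /psum !big_ord0.
rewrite [leLHS]/psum big_ord_recl /= big1 ?add0r => [|q _]; last exact: cnorm20.
apply: le_trans (_ : _ <= psum (expn m) (fun k p => cnorm2 (x k p)) K) _.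
  by apply: ler_sum => k _; apply: level_shift_le.
by apply: psum_nondecreasing => // k p; apply: cnorm2_ge0.
Qed.

Lemma psum_unshift_le i x K :
  psum (expn m) (fun k p => cnorm2 (unshift_coef i x k p)) K <=
  psum (expn m) (fun k q => cnorm2 (x k q)) K.+1.
Proof.
rewrite [leRHS]/psum big_ord_recl /= -[leLHS]add0r lerD ?sumr_ge0 // => [q _|].
  exact: cnorm2_ge0.
by apply: ler_sum => k _; apply: level_unshift_le.
Qed.

Lemma is_l2_shift i x : is_l2 (expn m) V x -> is_l2 (expn m) V (shift_coef i x).
Proof.
move=> [_ [M xM]]; split=> [[|k] q kq //=|]; first by rewrite (negbTE kq).
by exists M => K; apply: le_trans (psum_shift_le i x K) (xM K).
Qed.

Lemma is_l2_unshift i x : is_l2 (expn m) V x -> is_l2 (expn m) V (unshift_coef i x).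
Proof.
move=> [_ [M xM]]; split=> [k p kp|]; first by rewrite /unshift_coef (negbTE kp).
by exists M => K; apply: le_trans (psum_unshift_le i x K) (xM K.+1).
Qed.

Definition shift i (x : H) : H := L2 (asboolT (is_l2_shift i (is_l2_coef x))).
Definition unshift i (x : H) : H := L2 (asboolT (is_l2_unshift i (is_l2_coef x))).

Lemma coef_shift i x k q : coef (shift i x) k q = shift_coef i (coef x) k q.
Proof. by []. Qed.

Lemma coef_unshift i x k p : coef (unshift i x) k p = unshift_coef i (coef x) k p.
Proof. by []. Qed.

Lemma shift_linear i a x y : shift i (a *: x + y) = a *: shift i x + shift i y.
Proof.
apply: eq_l2 => -[|k] q; rewrite coefD coefZ !coef_shift /=; first by rewrite mulr0 addr0.
by case: ifP => _; rewrite ?mulr0 ?addr0.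
Qed.

Lemma shiftD i x y : shift i (x + y) = shift i x + shift i y.
Proof. by rewrite -[x]scale1r shift_linear !scale1r. Qed.

Lemma shift0 i : shift i 0 = 0.
Proof. by apply: eq_l2 => -[|k] q //=; case: ifP. Qed.

Lemma shift_sum i I (r : seq I) (F : I -> H) :
  shift i (\sum_(j <- r) F j) = \sum_(j <- r) shift i (F j).
Proof. exact: (big_morph (shift i) (shiftD i) (shift0 i)). Qed.

Lemma bounded_shift i : bounded_op ip (shift i).
Proof.
split; first exact: shift_linear.
exists 1 => x; rewrite mul1r !hnorm_l2 ler_sqrt ?l2norm2_ge0 //.
apply: l2norm2_le => K; apply: le_trans (pnorm2_le x K).
exact: psum_shift_le.
Qed.

Lemma pdot_shift i x y K : pdot (shift i x) y K.+1 = pdot x (unshift i y) K.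
Proof.
rewrite /pdot /psum big_ord_recl /= big1 ?add0r => [|q _]; last by rewrite mul0r.
apply: eq_bigr => k _ /=; have [im|mi] := ltnP i m; last first.
  rewrite !big1 // => [p _|q _]; last by rewrite !andbF mul0r.
  by rewrite /unshift_coef ltnNge mi !andbF rmorph0 mulr0.
pose G q := if V k.+1 q then coef x k (q %/ m)%N * (coef y k.+1 q)^* else 0.
rewrite expnSr (eq_bigr (fun q : 'I__ => if (q %% m == i)%N then G q else 0)) => [|q _].
  rewrite (sum_modn_eq G) //; apply: eq_bigr => p _.
  rewrite /G divn_child // /unshift_coef im andbT.
  have [_|/(coef_out x)->] := boolP (V k p); last by rewrite !mul0r if_same.
  by case: ifP; rewrite ?rmorph0 ?mulr0.
by rewrite /G andbT; case: (V k.+1 q); case: (q %% m == i)%N; rewrite ?mul0r.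
Qed.

Lemma adjoint_shift i : is_adjoint ip (shift i) (unshift i).
Proof.
move=> x y; apply/esym/cvgC_lim.
rewrite (_ : pdot x (unshift i y) = fun K => pdot (shift i x) y K.+1).
  exact/cvgC_shiftS/cvgC_pdot.
by apply/funext => K; rewrite pdot_shift.
Qed.

Hypothesis V_root : V 0 0.

Lemma level0 p : V 0 p -> p = 0%N.
Proof. by move/V_lt; rewrite expn0 ltnS leqn0 => /eqP. Qed.

Variable n : nat.
Hypothesis m_le_n : (m <= n)%N.

Local Notation T := (fun i : 'I_n => shift i).
Local Notation Ts := (fun i : 'I_n => unshift i).

Lemma coef_sum_shift_unshift (G : H -> H) (c : nat -> bool) :
  (forall y k p, coef (G y) k p = if c k then coef y k p else 0) ->
  forall x k q, coef (\sum_(i < n) shift i (G (unshift i x))) k q =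
    if k is k'.+1 then (if c k' then coef x k q else 0) else 0.
Proof.
move=> Gc x [|k] q; rewrite coef_sum; first by rewrite big1.
have qn : (q %% m < n)%N by rewrite (leq_trans _ m_le_n) // ltn_mod.
rewrite (bigD1 (Ordinal qn)) //= big1 ?addr0 => [|i iq]; last first.
  rewrite (_ : (q %% m == i)%N = false) ?andbF //.
  by apply: contraNF iq => /eqP qi; apply/eqP/val_inj.
rewrite eqxx ltn_mod m_gt0 andbT Gc coef_unshift /unshift_coef -divn_eq.
rewrite ltn_mod m_gt0 andbT.
case Vq: (V k.+1 q); last by rewrite coef_out ?Vq // if_same.
by rewrite V_parent //; case: (c k).
Qed.

Lemma coef_phi_id x k q : coef (phi T Ts id x) k q = if k is _.+1 then coef x k q else 0.
Proof. by rewrite /phi (@coef_sum_shift_unshift id (fun=> true)) //; case: k. Qed.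

Lemma defect_id x : x - phi T Ts id x = coef x 0 0 *: delta 0 0.
Proof.
apply: eq_l2 => -[|k] p; rewrite coefB coef_phi_id coefZ coef_delta /delta_coef /=;
  last by rewrite subrr mulr0.
rewrite subr0 V_root andbT; case: (p =P 0%N) => [->|p0]; first by rewrite mulr1.
by rewrite mulr0 coef_out //; apply: contra_notN p0 => /level0.
Qed.

Lemma op_le_phi_id : op_le ip (phi T Ts id) id.
Proof.
move=> x; have -> : phi T Ts id x = x - coef x 0 0 *: delta 0 0.
  by rewrite -defect_id subKr.
rewrite (ipBl (l2dot_inner V_lt)) (ipZl (l2dot_inner V_lt)) (l2dotC x (delta _ _)).
rewrite (l2dot_delta V_lt) // mulcJ /cIm /cRe.
by have := cnorm2_ge0 (coef x 0 0); case: (ip x x) => a b /=; split; lra.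
Qed.

Lemma finite_rank_defect_id : finite_rank (fun x => x - phi T Ts id x).
Proof.
by exists [:: delta 0 0] => x; exists (fun=> coef x 0 0); rewrite defect_id big_ord1.
Qed.

Definition nchildren k p : nat := \sum_(i < m) V k.+1 (p * m + i).

Lemma nchildren_le k p : (nchildren k p <= m)%N.
Proof.
rewrite /nchildren -[X in (_ <= X)%N]sum1_ord.
by apply: leq_sum => i _; apply: leq_b1.
Qed.

Lemma coef_phistar_id x k p :
  coef (phistar T Ts id x) k p = (nchildren k p)%:R * coef x k p.
Proof.
rewrite /phistar coef_sum /nchildren natr_sum mulr_suml.
rewrite (big_ord_widen_cond n xpredT
  (fun i => (V k.+1 (p * m + i))%:R * coef x k p) m_le_n).
rewrite [RHS]big_mkcond; apply: eq_bigr => i _ /=.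
rewrite /unshift_coef; case: ltnP => im; rewrite ?andbF //.
have [_|/(coef_out x)->] := boolP (V k p); last by rewrite /= mulr0.
rewrite /= andbT modn_child // divn_child // eqxx im andbT.
by case: (V _ _); rewrite ?mul1r ?mul0r.
Qed.

Lemma hnorm_phistar_id_le x : hnorm ip (phistar T Ts id x) <= m%:R * hnorm ip x.
Proof.
rewrite !hnorm_l2 -[m%:R]ger0_norm // -sqrtr_sqr -sqrtrM ?sqr_ge0 //.
rewrite ler_sqrt ?mulr_ge0 ?sqr_ge0 ?l2norm2_ge0 //.
apply: l2norm2_le => K; apply: le_trans (_ : _ <= m%:R ^+ 2 * pnorm2 x K) _.
  rewrite /pnorm2 -psumZ; apply: ler_psum => k q.
  rewrite coef_phistar_id cnorm2M cnorm2_nat ler_wpM2r ?cnorm2_ge0 //.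
  by rewrite lerXn2r ?nnegrE // ler_nat nchildren_le.
by rewrite ler_wpM2l ?sqr_ge0 ?pnorm2_le.
Qed.

Hypothesis V_children : forall i, (i < m)%N -> V 1 i.

Lemma nchildren_root : nchildren 0 0 = m.
Proof.
rewrite /nchildren -[RHS]sum1_ord.
by apply: eq_bigr => i _; rewrite mul0n add0n V_children.
Qed.

Lemma phistar_id_delta_root : phistar T Ts id (delta 0 0) = m%:R *: delta 0 0.
Proof.
apply: eq_l2 => k p; rewrite coef_phistar_id coefZ coef_delta /delta_coef V_root andbT.
by case: (k =P 0%N) => [->|_]; case: (p =P 0%N) => [->|_]; rewrite ?nchildren_root ?mulr0.
Qed.

Lemma opnorm_phistar_id : opnorm ip (phistar T Ts id) = m%:R.
Proof.
rewrite /opnorm; set S := [set _ | _ in _].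
have S_ub : ubound S m%:R.
  move=> _ [x /= x1 <-]; apply: le_trans (hnorm_phistar_id_le x) _.
  by rewrite ler_piMr.
have Sm : S m%:R.
  exists (delta 0 0); first by rewrite /= hnorm_l2 (l2norm2_delta V_lt) // sqrtr1.
  rewrite phistar_id_delta_root hnorm_l2 l2norm2Z (l2norm2_delta V_lt) // mulr1.
  by rewrite cnorm2_nat sqrtr_sqr ger0_norm.
apply/le_anti/andP; split; first by apply: ge_sup => //; exists m%:R.
by apply: sup_upper_bound => //; split; exists m%:R.
Qed.

Definition word_sum j (x : H) : H :=
  \sum_(a : j.-tuple 'I_n) Talpha T a (defect T Ts id (Tsalpha Ts a x)).

Lemma word_sumS j x : word_sum j.+1 x = \sum_(i < n) shift i (word_sum j (unshift i x)).
Proof.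
rewrite /word_sum.
rewrite (big_tuple_cons j (fun a => Talpha T a (defect T Ts id (Tsalpha Ts a x)))).
by apply: eq_bigr => i _; rewrite shift_sum.
Qed.

Lemma coef_word_sum j x k p : coef (word_sum j x) k p = if k == j then coef x k p else 0.
Proof.
elim: j x k p => [|j IHj] x k p.
  rewrite /word_sum (eq_bigr (fun=> x - phi T Ts id x)) => [|a _]; last by rewrite tuple0.
  rewrite sumr_const card_tuple expn0 mulr1n coefB coef_phi_id.
  by case: k => [|k] /=; rewrite ?subr0 ?subrr.
by rewrite word_sumS (coef_sum_shift_unshift (c := fun k => k == j)) //; case: k.
Qed.

Lemma coef_KPK k x j p :
  coef (KPK T Ts id k x) j p = if (j <= k)%N then coef x j p else 0.
Proof.
rewrite /KPK coef_sum.
rewrite (eq_bigr (fun i : 'I_k.+1 => if i == j :> nat then coef x j p else 0)).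
  by rewrite -big_mkcond (big_ord1_eq _ (fun=> coef x j p)) ltnS.
by move=> i _; rewrite -/(word_sum i x) coef_word_sum eq_sym.
Qed.

Lemma l2dot_KPK k x : ip (KPK T Ts id k x) x = (pnorm2 x k.+1)%:C.
Proof.
apply: cvgC_lim; apply: cvgC_near_cst; near=> K.
rewrite /pdot (@eq_psum _ _ _
  (fun j p => if (j < k.+1)%N then (cnorm2 (coef x j p))%:C else 0)).
  rewrite psum_trunc /pnorm2 ?psum_morph ?rmorph0 //; first exact: rmorphD.
  by near: K; apply: nbhs_infty_ge.
by move=> j p; rewrite coef_KPK ltnS; case: ifP; rewrite ?mulcJ ?mul0r.
Unshelve. all: end_near.
Qed.

Definition nverts k : nat := \sum_(j < k.+1) \sum_(p < m ^ j) V j p.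

Lemma nvertsE k : (nverts k)%:R = psum (expn m) (fun j p => (V j p)%:R) k.+1 :> R.
Proof. by rewrite /nverts natr_sum; apply: eq_bigr => j _; rewrite natr_sum. Qed.

Lemma trace_KPK_le k (s : seq H) : Defs.orthonormal ip s ->
  \sum_(e <- s) cRe (ip (KPK T Ts id k e) e) <= (nverts k)%:R.
Proof.
move=> ons; under eq_bigr do rewrite l2dot_KPK /cRe /=.
rewrite /pnorm2 -psum_big nvertsE; apply: ler_psum => j p.
have [Vjp|/coef_out Vjp] := boolP (V j p); last first.
  by rewrite big1 // => e _; rewrite Vjp cnorm20.
rewrite (eq_bigr (fun e => cnorm2 (ip (delta j p) e))) => [|e _]; last first.
  by rewrite (l2dotC e) cnorm2J (l2dot_delta V_lt).
apply: le_trans (bessel (l2dot_inner V_lt) (delta j p) ons) _.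
by rewrite l2dot_self (l2norm2_delta V_lt) ?Vjp.
Qed.

Definition vertices k : seq (nat * nat) :=
  [seq jp <- [seq (j, p) | j <- index_iota 0 k.+1, p <- index_iota 0 (m ^ k)]
     | V jp.1 jp.2].

Lemma vertices_uniq k : uniq (vertices k).
Proof. by apply/filter_uniq/allpairs_uniq; rewrite ?iota_uniq // => -[? ?] [? ?]. Qed.

Lemma mem_vertices k jp : jp \in vertices k -> V jp.1 jp.2 && (jp.1 <= k)%N.
Proof.
rewrite mem_filter => /andP [-> /allpairsP [[j p] [+ _ ->]]] /=.
by rewrite mem_iota ltnS.
Qed.

Lemma orthonormal_vertices k :
  Defs.orthonormal ip [seq delta jp.1 jp.2 | jp <- vertices k].
Proof.
move=> a b; rewrite size_map => ak bk; rewrite !(nth_map (0, 0)%N) //.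
have := nth_uniq (0, 0)%N ak bk (vertices_uniq k).
have /andP [Va _] := mem_vertices (mem_nth (0, 0)%N ak).
have /andP [Vb _] := mem_vertices (mem_nth (0, 0)%N bk).
case: (nth _ _ a) Va => a1 a2 /= Va; case: (nth _ _ b) Vb => b1 b2 /= Vb <-.
rewrite (l2dot_delta V_lt) // coef_delta /delta_coef Va andbT xpair_eqE.
by rewrite eq_sym [b2 == a2]eq_sym.
Qed.

Lemma trace_KPK_vertices k :
  \sum_(e <- [seq delta jp.1 jp.2 | jp <- vertices k]) cRe (ip (KPK T Ts id k e) e) =
  (nverts k)%:R.
Proof.
rewrite big_map (eq_big_seq (fun=> 1)) => [|[j p] /mem_vertices /andP [Vjp jk]].
  rewrite /vertices big_filter big_mkcond big_allpairs /= nvertsE big_mkord.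
  apply: eq_bigr => j _; rewrite big_mkord.
  have jk : (m ^ j <= m ^ k)%N by rewrite leq_pexp2l // -ltnS.
  rewrite (big_ord_widen (m ^ k) (fun p => ((V j p)%:R : R))) // [RHS]big_mkcond.
  apply: eq_bigr => p _; case Vjp: (V j p) => /=; first by rewrite (V_lt Vjp).
  by case: ifP.
rewrite l2dot_KPK /cRe /pnorm2 (eq_psum _ _ (cnorm2_delta_coef R V j p)) psum_delta.
by move: Vjp jk => /= Vjp jk; rewrite ltnS jk (V_lt Vjp) Vjp.
Qed.

Lemma ptrace_KPK k : ptrace ip (KPK T Ts id k) = ((nverts k)%:R)%:E.
Proof.
apply/le_anti/andP; split.
  by apply: ge_ereal_sup => _ [s ons <-]; rewrite lee_fin trace_KPK_le.
apply: ereal_sup_ubound; exists [seq delta jp.1 jp.2 | jp <- vertices k].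
  exact: orthonormal_vertices.
by rewrite trace_KPK_vertices.
Qed.

Lemma curv_seq_tree k :
  curv_seq ip T Ts id k = ((nverts k)%:R / \sum_(j < k.+1) m%:R ^+ j)%:E.
Proof. by rewrite /curv_seq ptrace_KPK opnorm_phistar_id. Qed.

End TreeShifts.

Section TruncatedTree.
Variable R : realType.
Variables (m : nat) (t : R).
Hypothesis m_ge2 : (2 <= m)%N.
Hypothesis t_gt0 : 0 < t.
Hypothesis t_le1 : t <= 1.

Definition trunc_tree (k p : nat) : bool :=
  (p < m ^ k)%N && ((k <= 1)%N || (p%:R < t * (m ^ k)%:R)).

Lemma trunc_tree_lt k p : trunc_tree k p -> (p < m ^ k)%N.
Proof. by case/andP. Qed.

Lemma trunc_tree_parent k q : trunc_tree k.+1 q -> trunc_tree k (q %/ m)%N.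
Proof.
have m_gt0 : (0 < m)%N by apply: leq_trans m_ge2.
case/andP=> qm qt; apply/andP; split; first by rewrite ltn_divLR // -expnSr.
case: (leqP k 1) => // k1; move: qt; rewrite ltnNge (ltnW k1) /=.
rewrite expnSr natrM mulrA => qt.
have qmq : (q %/ m)%:R * m%:R <= q%:R :> R by rewrite -natrM ler_nat leq_divM.
by rewrite -(ltr_pM2r (_ : 0 < m%:R)) ?ltr0n // (le_lt_trans qmq).
Qed.

Lemma trunc_tree_root : trunc_tree 0 0.
Proof. by rewrite /trunc_tree expn0. Qed.

Lemma trunc_tree_children i : (i < m)%N -> trunc_tree 1 i.
Proof. by rewrite /trunc_tree expn1 => ->. Qed.

Lemma count_ltr_bounds (x : R) M : 0 < x -> x <= M%:R ->
  x <= (\sum_(p < M) ((p%:R < x)%R : bool))%:R < x + 1.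
Proof.
elim: M => [|M IHM] x_gt0 xM; first by move: (lt_le_trans x_gt0 xM); rewrite ltxx.
rewrite big_ord_recr /=; case: (lerP x M%:R) => [xM'|Mx].
  by rewrite addn0 IHM.
rewrite (eq_bigr (fun=> 1%N)) => [|p _]; last first.
  by rewrite (le_lt_trans _ Mx) // ler_nat ltnW.
by rewrite sum1_ord addn1 xM -natr1 ltrD2r.
Qed.

Lemma level_count_bounds j :
  t * m%:R ^+ j <= (\sum_(p < m ^ j) trunc_tree j p)%:R <= t * m%:R ^+ j + m%:R.
Proof.
have m_gt0 : (0 < m)%N by apply: leq_trans m_ge2.
rewrite -natrX; have [j1|j2] := leqP j 1.
  rewrite (eq_bigr (fun=> 1%N)) => [|p _]; last by rewrite /trunc_tree ltn_ord j1.
  rewrite sum1_ord ler_piMl ?ler0n //=.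
  have : (m ^ j <= m)%N by case: j j1 => [|[|]] //; rewrite expn0 ltnW.
  rewrite -(ler_nat R) => mjm; apply: le_trans mjm _.
  by rewrite lerDr mulr_ge0 // ltW.
rewrite (eq_bigr (fun p : 'I__ => ((p%:R < t * (m ^ j)%:R)%R : nat))) => [|p _];
  last first.
  by rewrite /trunc_tree ltn_ord leqNgt j2.
have x_gt0 : 0 < t * (m ^ j)%:R by rewrite mulr_gt0 // ltr0n expn_gt0 m_gt0.
have /andP [-> hi] := count_ltr_bounds x_gt0 (ler_piMl (ler0n _ _) t_le1).
by apply: le_trans (ltW hi) _; rewrite lerD2l ler1n ltnW.
Qed.

Lemma nverts_bounds k :
  t * \sum_(j < k.+1) m%:R ^+ j <= (nverts m trunc_tree k)%:R <=
  t * \sum_(j < k.+1) m%:R ^+ j + k.+1%:R * m%:R.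
Proof.
rewrite /nverts natr_sum mulr_sumr; apply/andP; split.
  by apply: ler_sum => j _; case/andP: (level_count_bounds j).
have -> : \sum_(j < k.+1) t * m%:R ^+ j + k.+1%:R * m%:R =
          \sum_(j < k.+1) (t * m%:R ^+ j + m%:R).
  by rewrite big_split /= sumr_const card_ord mulr_natl.
by apply: ler_sum => j _; case/andP: (level_count_bounds j).
Qed.

Lemma sum_expr_ge k : k.+1%:R ^+ 2 <= 2 * \sum_(j < k.+1) m%:R ^+ j :> R.
Proof.
have pow_ge j : j.+1%:R <= m%:R ^+ j :> R.
  rewrite -natrX ler_nat; elim: j => [|j IHj]; first by rewrite expn0.
  by rewrite expnS; have := m_ge2; nia.
elim: k => [|k IHk]; first by rewrite big_ord1 expr0 expr1n; lra.
rewrite big_ord_recr /=; set D := \sum_(j < k.+1) _ in IHk *.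
have := pow_ge k.+1; rewrite -!natr1 in IHk * => mk.
nra.
Qed.

Lemma nverts_ratio_cvg :
  (fun k => (nverts m trunc_tree k)%:R / \sum_(j < k.+1) m%:R ^+ j) @ \oo --> t.
Proof.
apply: (@squeeze_cvgr _ _ _ _ (fun=> t) (fun k => t + 2 * m%:R * harmonic k)).
- near=> k; set D := \sum_(j < k.+1) _.
  have DK := sum_expr_ge k; rewrite -/D in DK.
  have K_gt0 : 0 < k.+1%:R :> R by rewrite ltr0n.
  have D_gt0 : 0 < D by nra.
  have /andP [lo hi] := nverts_bounds k; rewrite -/D in lo hi.
  rewrite ler_pdivlMr // lo ler_pdivrMr //= mulrDl; apply: le_trans hi _.
  rewrite lerD2l /harmonic /=; set h := k.+1%:R^-1.
  have Kh : k.+1%:R * h = 1 by rewrite mulfV // gt_eqF.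
  have mh : 0 <= m%:R * h by rewrite mulr_ge0 ?ler0n // invr_ge0 ltW.
  have -> : k.+1%:R * m%:R = m%:R * h * k.+1%:R ^+ 2.
    by rewrite expr2 mulrA -[_ * h * _]mulrA [h * _]mulrC Kh mulr1 mulrC.
  nra.
- exact: cvg_cst.
- rewrite -[X in _ --> X]addr0; apply: cvgD; first exact: cvg_cst.
  by rewrite -(mulr0 (2 * m%:R)); apply: cvgMl_tmp; apply: cvg_harmonic.
Unshelve. all: end_near.
Qed.

End TruncatedTree.

Theorem proposition6p7 (R : realType) (n m : nat) (t : R) :
  (3 <= n)%N -> (2 <= m)%N -> (m <= n - 1)%N -> (0 < t <= 1) ->
  exists (H : lmodType (complex R)) (ip : H -> H -> complex R)
         (T Ts : 'I_n -> H -> H),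
    is_hilbert ip /\
    [/\ (forall i, bounded_op ip (T i) /\ is_adjoint ip (T i) (Ts i)),
        op_le ip (phi T Ts id) id,
        finite_rank (fun x => x - phi T Ts id x),
        opnorm ip (phistar T Ts id) = m%:R
      & curv_eq ip T Ts id t].
Proof.
(* [3 <= n] is implied by [2 <= m <= n - 1] *)
move=> _ m_ge2 m_lt_n /andP [t_gt0 t_le1].
have m_gt0 : (0 < m)%N by apply: leq_trans m_ge2.
have m_le_n : (m <= n)%N by apply: leq_trans m_lt_n (leq_subr 1 n).
pose V := trunc_tree m t.
have V_lt : forall k p, V k p -> (p < m ^ k)%N by apply: trunc_tree_lt.
have V_parent : forall k q, V k.+1 q -> V k (q %/ m)%N by apply: trunc_tree_parent.
have V_root : V 0 0 by apply: trunc_tree_root.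
have V_children : forall i, (i < m)%N -> V 1 i by apply: trunc_tree_children.
exists (l2 R (expn m) V), l2dot, (fun i : 'I_n => shift i), (fun i : 'I_n => unshift i).
split; first by split; [apply: l2dot_inner | apply: l2dot_complete].
split.
- by move=> i; split; [apply: bounded_shift | apply: adjoint_shift].
- exact: op_le_phi_id.
- exact: finite_rank_defect_id.
- exact: opnorm_phistar_id.
rewrite /curv_eq (_ : curv_seq _ _ _ _ =
    fun k => ((nverts m V k)%:R / \sum_(j < k.+1) m%:R ^+ j)%:E).
  by apply: cvg_EFin; [apply: nearW | apply: nverts_ratio_cvg].
by apply/funext => k; apply: curv_seq_tree.
Qed.
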